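(* Let $G=(V,E)$ be a graph, $v\in V$, and $F$ a set of $k$ new edges (pairs not in $E$), with $\bar G=(V,E\cup F)$. Then $$LCC_{\bar G}(v)\le \overline{LCC}(v,k):=\max_{k_1+k_2=k}\ \frac{n_v+k_2+k_1\, d_G(v)+\binom{k_1}{2}}{\binom{d_G(v)+k_1}{2}},$$ where the maximum is over nonnegative integers $k_1,k_2$ with $k_1+k_2=k$, and $n_v=LCC_G(v)\binom{d_G(v)}{2}$ is the number of edges of $G$ between neighbors of $v$.
   Context: $G=(V,E)$ is a simple undirected graph; $N_G(v)$ is the neighbor set and $d_G(v)=|N_G(v)|$ the degree of $v$; $LCC_G(v)=\frac{|\{(i,j): i,j\in N_G(v),\ (i,j)\in E\}|}{\binom{d_G(v)}{2}}$ is the local clustering coefficient. *)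

(* A simple undirected graph on a finite vertex type T is
   given by its edge set E : {set {set T}} whose elements are 2-subsets. *)
From mathcomp Require Import all_boot all_order all_algebra.
Set Implicit Arguments. Unset Strict Implicit. Unset Printing Implicit Defensive.
Import Order.TTheory GRing.Theory Num.Theory.
Local Open Scope ring_scope.

Section Graph.
Variable T : finType.

Definition simple_edges (E : {set {set T}}) : Prop :=
  forall e, e \in E -> #|e| = 2%N.

Definition nbhd (E : {set {set T}}) (v : T) : {set T} :=
  [set u | [set v; u] \in E].

Definition deg (E : {set {set T}}) (v : T) : nat := #|nbhd E v|.

Definition nbhd_edges (E : {set {set T}}) (v : T) : nat :=
  #|[set e in E | e \subset nbhd E v]|.

(* local clustering coefficient (division by 0 yields 0, the usual MathComp
   convention; only relevant when d_G(v) < 2) *)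
Definition LCC (R : fieldType) (E : {set {set T}}) (v : T) : R :=
  (nbhd_edges E v)%:R / ('C(deg E v, 2))%:R.

Definition nv (R : fieldType) (E : {set {set T}}) (v : T) : R :=
  LCC R E v * ('C(deg E v, 2))%:R.

Definition LCC_bound (R : realFieldType) (E : {set {set T}}) (v : T) (k : nat) : R :=
  \big[Num.max/0]_(k1 < k.+1)
     ((nv R E v + (k - k1)%N%:R + (k1 * deg E v)%N%:R + ('C(k1, 2))%:R)
        / ('C(deg E v + k1, 2)%N)%:R).
End Graph.

(* Let k1 be the number of new neighbours of v.  Each of them is joined to v
   by its own edge of F, so at most k - k1 edges of F avoid v, and the degree
   of v becomes d + k1.  An edge of the new neighbourhood is an old
   neighbourhood edge, an edge of F avoiding v, or a pair of new-neighbourhood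
   vertices not inside the old one; there are C(d + k1, 2) - C(d, 2) =
   k1 d + C(k1, 2) such pairs.  Hence the new clustering coefficient is at most
   the k1-th term of the maximum. *)
From mathcomp Require Import all_boot all_order all_algebra.
From mathcomp Require Import zify.
Set Implicit Arguments. Unset Strict Implicit. Unset Printing Implicit Defensive.
Import Order.TTheory GRing.Theory Num.Theory.
Local Open Scope ring_scope.

Lemma bin2D (m n : nat) : 'C(m + n, 2) = ('C(m, 2) + m * n + 'C(n, 2))%N.
Proof.
rewrite -binomial.Vandermonde !big_ord_recr big_ord0 /= !bin0 !bin1 subn0.
lia.
Qed.

Section LocalClustering.
Variable T : finType.
Implicit Types (E F : {set {set T}}) (v : T).

Definition edges_at v : {set {set T}} := [set e : {set T} | v \in e].

Lemma simple_edgesU E F :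
  simple_edges E -> simple_edges F -> simple_edges (E :|: F).
Proof. by move=> sE sF e /setUP[/sE|/sF]. Qed.

Lemma notin_nbhd E v : simple_edges E -> v \notin nbhd E v.
Proof. by move=> sE; rewrite inE; apply/negP=> /sE; rewrite cards2 eqxx. Qed.

Lemma nbhdS E E' v : E \subset E' -> nbhd E v \subset nbhd E' v.
Proof. by move=> sEE'; apply/subsetP=> u; rewrite !inE => /(subsetP sEE'). Qed.

Lemma nbhd_edges_le_bin E v :
  simple_edges E -> (nbhd_edges E v <= 'C(deg E v, 2))%N.
Proof.
move=> sE; rewrite /nbhd_edges /deg -cards_draws; apply: subset_leq_card.
by apply/subsetP=> e; rewrite !inE => /andP[/sE -> ->].
Qed.

Lemma nv_nbhd_edges (R : numFieldType) E v :
  simple_edges E -> nv R E v = (nbhd_edges E v)%:R.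
Proof.
move=> sE; rewrite /nv /LCC.
have [C0|C0] := eqVneq 'C(deg E v, 2) 0%N; last by rewrite divfK // pnatr_eq0.
by move: (nbhd_edges_le_bin v sE); rewrite C0 leqn0 => /eqP ->; rewrite !mul0r.
Qed.

Lemma deg_setU E F v :
  deg (E :|: F) v = (deg E v + #|nbhd (E :|: F) v :\: nbhd E v|)%N.
Proof.
by rewrite /deg -(cardsID (nbhd E v)) (setIidPr (nbhdS v (subsetUl E F))).
Qed.

(* Each new neighbour u of v is witnessed by the new edge {v, u}. *)
Lemma card_new_nbhd E F v :
  (#|nbhd (E :|: F) v :\: nbhd E v| <= #|F :&: edges_at v|)%N.
Proof.
set A := _ :\: _.
have inj_pair : {in A &, injective (fun u => [set v; u])}.
  move=> u w _ _ uw.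
  have : u \in [set v; w] by rewrite -uw set22.
  have : w \in [set v; u] by rewrite uw set22.
  by rewrite !inE => /orP[/eqP-> /orP[]/eqP|/eqP].
rewrite -(card_in_imset inj_pair); apply: subset_leq_card.
apply/subsetP=> e /imsetP[u /setDP[]]; rewrite !inE => /orP[-> //|uF _ ->].
by rewrite uF set21.
Qed.

Lemma nbhd_edgesU_le E F v : simple_edges E -> simple_edges F ->
  (nbhd_edges (E :|: F) v <= nbhd_edges E v + #|F :\: edges_at v|
     + ('C(deg (E :|: F) v, 2) - 'C(deg E v, 2)))%N.
Proof.
move=> sE sF; set N := nbhd E v; set N' := nbhd (E :|: F) v.
set P2 := fun X : {set T} => [set A : {set T} | A \subset X & #|A| == 2%N].
have vN' : v \notin N' by apply: notin_nbhd; apply: simple_edgesU.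
have P2S : P2 N \subset P2 N'.
  apply/subsetP=> A; rewrite !inE => /andP[AN ->].
  by rewrite (subset_trans AN) ?nbhdS ?subsetUl.
have card_P2 : #|P2 N' :\: P2 N| = ('C(deg (E :|: F) v, 2) - 'C(deg E v, 2))%N.
  by rewrite cardsD (setIidPr P2S) !cards_draws.
rewrite -card_P2 /nbhd_edges -/N -/N'.
apply: leq_trans (leq_trans (leq_card_setU _ _) (leq_add (leq_card_setU _ _) (leqnn _))).
apply: subset_leq_card; apply/subsetP=> e; rewrite !inE => /andP[eEF eN'].
have -> : #|e| = 2%N by case/orP: eEF => [/sE|/sF].
rewrite eqxx eN' !andbT; case/orP: eEF => [eE|eF].
  by rewrite eE /=; case: (e \subset N); rewrite ?orbT.
have ve : v \notin e by apply: contra vN' => /(subsetP eN').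
by rewrite eF ve orbT.
Qed.

End LocalClustering.

Theorem theorem3 (R : realFieldType) (T : finType) (E F : {set {set T}})
    (v : T) (k : nat) :
  simple_edges E -> simple_edges F ->
  [disjoint F & E] -> #|F| = k ->
  LCC R (E :|: F) v <= LCC_bound R E v k.
Proof.
move=> sE sF _ cardF.
set k1 := #|nbhd (E :|: F) v :\: nbhd E v|.
have k1_le : (k1 + #|F :\: edges_at v| <= k)%N.
  by rewrite -cardF -(cardsID (edges_at v) F) leq_add2r card_new_nbhd.
have k1_lt : (k1 < k.+1)%N by rewrite ltnS (leq_trans (leq_addr _ _) k1_le).
apply: le_trans (le_bigmax _ _ (Ordinal k1_lt)) => /=.
rewrite nv_nbhd_edges // /LCC deg_setU -/k1 -!natrD.
apply: ler_wpM2r; first by rewrite invr_ge0 ler0n.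
have := nbhd_edgesU_le v sE sF; rewrite ler_nat deg_setU -/k1 bin2D.
lia.
Qed.
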